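(* Let $M_n=V\,{\rm diag}(\Lambda_{n1},\dots,\Lambda_{nd})V^{-1}$, $n=1,\dots,N$, with $V$ real invertible and $\Lambda_{ni}$ real, let $\gamma=\min_{j<j'}\sum_{n=1}^N(\Lambda_{nj}-\Lambda_{nj'})^2$, and let $U_\circ$ be an orthogonal matrix with ${\rm low}(U_\circ^TM_nU_\circ)=0$ for all $n$. Then for every skew-symmetric $X$, $$\sum_{n=1}^N{\rm Tr}(\dot g_n^T\dot g_n)\ge\varepsilon\|X\|^2,\qquad \dot g_n={\rm low}\big([U_\circ^TM_nU_\circ,X]\big),\qquad \varepsilon=\frac{\gamma}{2\kappa(V)^4}.$$
   Context: ${\rm low}(A)$ is the strictly lower-triangular part of $A$; $[A,B]=AB-BA$; $\|\cdot\|$ is the Frobenius norm; $\kappa(V)=\sigma_{\max}(V)/\sigma_{\min}(V)$. *)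

From HB Require Import structures.
From mathcomp Require Import all_boot all_order all_algebra.
From mathcomp Require Import classical_sets reals.
Set Implicit Arguments. Unset Strict Implicit. Unset Printing Implicit Defensive.
Import Order.TTheory GRing.Theory Num.Theory.
Local Open Scope ring_scope.
Local Open Scope classical_set_scope.

Definition low (R : realType) (d : nat) (A : 'M[R]_d) : 'M[R]_d :=
  \matrix_(i, j) (if (j < i)%N then A i j else 0).

Definition comm_mxr (R : realType) (d : nat) (A B : 'M[R]_d) : 'M[R]_d :=
  A *m B - B *m A.

Definition frob (R : realType) (m n : nat) (A : 'M[R]_(m, n)) : R :=
  Num.sqrt (\sum_i \sum_j A i j ^+ 2).

Definition vnorm (R : realType) (d : nat) (x : 'cV[R]_d) : R :=
  Num.sqrt (\sum_i x i 0 ^+ 2).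

Definition sigma_max (R : realType) (d : nat) (V : 'M[R]_d) : R :=
  sup [set vnorm (V *m x) | x in [set x : 'cV[R]_d | vnorm x = 1]].
Definition sigma_min (R : realType) (d : nat) (V : 'M[R]_d) : R :=
  inf [set vnorm (V *m x) | x in [set x : 'cV[R]_d | vnorm x = 1]].

Definition kappa (R : realType) (d : nat) (V : 'M[R]_d) : R :=
  sigma_max V / sigma_min V.

Definition gap (R : realType) (N d : nat) (Lam : 'I_N -> 'I_d -> R) : R :=
  inf [set (\sum_n (Lam n p.1 - Lam n p.2) ^+ 2)
       | p in [set p : 'I_d * 'I_d | (p.1 < p.2)%N]].

(* Put W = U^T V, so that T_n = U^T M_n U = W Λ_n W^-1 is upper triangular.
   Ordering the columns of W by the row of their last nonzero entry makes W
   upper triangular as well (distinct columns of eigenvalues force distinct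
   rows), so T_n = R D_n R^-1 with R upper triangular and D_n = diag(μ_n.) a
   permutation of Λ_n.  For L = low X (hence ||X||^2 = 2 ||L||^2) put
   A = R^T L R^-T and B_n = R^-T H_n R^T, where H_n = A ∘ ((μ_ni - μ_nj) / γ_ij)
   with γ_ij = Σ_n (μ_ni - μ_nj)^2 solves Σ_n [D_n, H_n] = A.  Since the B_n
   are strictly lower triangular, Σ_n <B_n, low [T_n, X]> = Σ_n <B_n, [T_n, X]>
   = <L, X> = ||L||^2, while Σ_n ||B_n||^2 <= κ^4 ||L||^2 / γ because γ <= γ_ij;
   Cauchy-Schwarz concludes. *)

From HB Require Import structures.
From mathcomp Require Import all_boot all_order all_algebra.
From mathcomp Require Import boolp classical_sets reals.
From mathcomp Require Import fingroup perm ring lra zify.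
Import Order.TTheory GRing.Theory Num.Theory.
Local Open Scope ring_scope.
Set Implicit Arguments. Unset Strict Implicit.

Section Frobenius.
Variable R : realFieldType.

Lemma sum_mul_sqr_le (I : finType) (a b : I -> R) :
  (\sum_i a i * b i) ^+ 2 <= (\sum_i a i ^+ 2) * (\sum_i b i ^+ 2).
Proof.
set A := \sum_i a i ^+ 2; set B := \sum_i b i ^+ 2; set S := \sum_i a i * b i.
have B_ge0 : 0 <= B by apply: sumr_ge0 => i _; apply: sqr_ge0.
have sum_sqr : \sum_i (a i * B - b i * S) ^+ 2 = B * (A * B - S ^+ 2).
  transitivity (\sum_i (B ^+ 2 * a i ^+ 2 - 2 * B * S * (a i * b i) + S ^+ 2 * b i ^+ 2)).
    by apply: eq_bigr => i _; ring.
  by rewrite big_split /= sumrB -!mulr_sumr -/A -/B -/S; ring.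
have : 0 <= B * (A * B - S ^+ 2).
  by rewrite -sum_sqr; apply: sumr_ge0 => i _; apply: sqr_ge0.
have [B_gt0 | B_le0] := ltrP 0 B; first by rewrite pmulr_rge0 // subr_ge0.
have B0 : B = 0 by apply/eqP; rewrite eq_le B_le0.
have b0 i : b i = 0.
  apply/eqP; rewrite -sqrf_eq0 eq_le sqr_ge0 andbT -B0 /B.
  by rewrite (bigD1 i) //= lerDl sumr_ge0 // => j _; apply: sqr_ge0.
by rewrite /S big1 ?expr0n ?B0 ?mulr0 // => i _; rewrite b0 mulr0.
Qed.

Definition mxdot m n (A B : 'M[R]_(m, n)) := \sum_i \sum_j A i j * B i j.
Definition frob2 m n (A : 'M[R]_(m, n)) := \sum_i \sum_j A i j ^+ 2.

Lemma frob2_ge0 m n (A : 'M[R]_(m, n)) : 0 <= frob2 A.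
Proof. by apply: sumr_ge0 => i _; apply: sumr_ge0 => j _; apply: sqr_ge0. Qed.

Lemma mxdotmm m n (A : 'M[R]_(m, n)) : mxdot A A = frob2 A.
Proof. by apply: eq_bigr => i _; apply: eq_bigr => j _; rewrite expr2. Qed.

Lemma mxdot_trace m n (A B : 'M[R]_(m, n)) : mxdot A B = \tr (A^T *m B).
Proof.
rewrite /mxdot /mxtrace exchange_big; apply: eq_bigr => j _.
by rewrite mxE; apply: eq_bigr => i _; rewrite mxE.
Qed.

Lemma frob2_trace m n (A : 'M[R]_(m, n)) : \tr (A^T *m A) = frob2 A.
Proof. by rewrite -mxdot_trace mxdotmm. Qed.

Lemma frob2_tr m n (A : 'M[R]_(m, n)) : frob2 A^T = frob2 A.
Proof. by rewrite /frob2 exchange_big; do 2!apply: eq_bigr => ? _; rewrite mxE. Qed.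

Lemma frob2_orthogonal m n (P : 'M[R]_m) (A : 'M[R]_(m, n)) :
  P^T *m P = 1%:M -> frob2 (P *m A) = frob2 A.
Proof. by move=> PP; rewrite -!frob2_trace trmx_mul -mulmxA (mulmxA P^T) PP mul1mx. Qed.

Lemma frob2_col m n (A : 'M[R]_(m, n)) : frob2 A = \sum_j frob2 (col j A).
Proof.
rewrite /frob2 exchange_big; apply: eq_bigr => j _.
by apply: eq_bigr => i _; rewrite big_ord1 mxE.
Qed.

Lemma frob2_mulmx_le m n p (A : 'M[R]_(m, n)) (B : 'M[R]_(n, p)) :
  frob2 (A *m B) <= frob2 A * frob2 B.
Proof.
rewrite /frob2 mulr_suml; apply: ler_sum => i _.
rewrite exchange_big mulr_sumr; apply: ler_sum => k _.
by rewrite mxE; apply: sum_mul_sqr_le.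
Qed.

Lemma mxdot_sqr_le m n (A B : 'M[R]_(m, n)) : mxdot A B ^+ 2 <= frob2 A * frob2 B.
Proof. by rewrite /mxdot /frob2 !pair_bigA; apply: sum_mul_sqr_le. Qed.

Lemma sum_mxdot_sqr_le (I : finType) m n (A B : I -> 'M[R]_(m, n)) :
  (\sum_k mxdot (A k) (B k)) ^+ 2 <= (\sum_k frob2 (A k)) * (\sum_k frob2 (B k)).
Proof.
have flat (F : I -> 'I_m -> 'I_n -> R) :
    \sum_k \sum_i \sum_j F k i j = \sum_p F p.1.1 p.1.2 p.2.
  by rewrite pair_bigA (pair_bigA _ (fun p j => F p.1 p.2 j)).
by rewrite /mxdot /frob2 !flat; apply: sum_mul_sqr_le.
Qed.

Lemma mxdot_suml (I : finType) m n (A : I -> 'M[R]_(m, n)) B :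
  \sum_k mxdot (A k) B = mxdot (\sum_k A k) B.
Proof.
rewrite /mxdot exchange_big; apply: eq_bigr => i _.
rewrite exchange_big; apply: eq_bigr => j _.
by rewrite summxE mulr_suml.
Qed.

Lemma mxdot_commr n (B T X : 'M[R]_n) :
  mxdot B (T *m X - X *m T) = mxdot (T^T *m B - B *m T^T) X.
Proof.
rewrite !mxdot_trace !(linearB, mulmxBl, mulmxBr) /= !trmx_mul trmxK.
by congr (_ - _); rewrite mulmxA // mxtrace_mulC mulmxA.
Qed.

Lemma ler_of_sqr_le_mul (a b : R) : 0 <= b -> a ^+ 2 <= a * b -> a <= b.
Proof. by move=> b_ge0; rewrite expr2; nra. Qed.

Definition mxbound m (M : 'M[R]_m) (c : R) :=
  forall y : 'cV[R]_m, frob2 (M *m y) <= c * frob2 y.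

Lemma mxbound_mulmx m n (M : 'M[R]_m) c (Y : 'M[R]_(m, n)) :
  mxbound M c -> frob2 (M *m Y) <= c * frob2 Y.
Proof.
by move=> Mc; rewrite !frob2_col mulr_sumr; apply: ler_sum => j _; rewrite !colE -mulmxA.
Qed.

Lemma mxbound_tr m (M : 'M[R]_m) c : 0 <= c -> mxbound M c -> mxbound M^T c.
Proof.
move=> c_ge0 Mc y; set z := M^T *m y.
have z_dot : frob2 z = mxdot y (M *m z).
  by rewrite -mxdotmm !mxdot_trace trmx_mul trmxK mulmxA.
apply: ler_of_sqr_le_mul; first by rewrite mulr_ge0 ?frob2_ge0.
rewrite {1}z_dot; apply: le_trans (mxdot_sqr_le _ _) _.
by have := Mc z; have := frob2_ge0 y; nra.
Qed.

Lemma mxbound_mulmxl m (P M : 'M[R]_m) c :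
  P^T *m P = 1%:M -> mxbound M c -> mxbound (P *m M) c.
Proof. by move=> PP Mc y; rewrite -mulmxA frob2_orthogonal. Qed.

Lemma mxbound_mulmxr m (M P : 'M[R]_m) c :
  P^T *m P = 1%:M -> mxbound M c -> mxbound (M *m P) c.
Proof. by move=> PP Mc y; rewrite -mulmxA -(frob2_orthogonal y PP). Qed.

Lemma frob2_conj_le m (M N Y : 'M[R]_m) c1 c2 : 0 <= c1 -> 0 <= c2 ->
  mxbound M c1 -> mxbound N c2 -> frob2 (M^T *m Y *m N^T) <= c1 * c2 * frob2 Y.
Proof.
move=> c1_ge0 c2_ge0 Mc1 Nc2; rewrite -mulmxA -mulrA.
apply: le_trans (mxbound_mulmx _ (mxbound_tr c1_ge0 Mc1)) _.
rewrite ler_wpM2l // -frob2_tr trmx_mul trmxK -(frob2_tr Y).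
exact: mxbound_mulmx.
Qed.
End Frobenius.

Section Triangular.
Variable R : comNzRingType.

Definition upper_trig d (A : 'M[R]_d) := forall i j : 'I_d, (j < i)%N -> A i j = 0.
Definition strict_lower d (A : 'M[R]_d) := forall i j : 'I_d, (i <= j)%N -> A i j = 0.

Lemma mulmx_upper_trigE d n (P : 'M[R]_d) (Q : 'M[R]_(d, n)) (i : 'I_d) c :
  upper_trig P -> (forall l : 'I_d, (i < l)%N -> Q l c = 0) ->
  (P *m Q) i c = P i i * Q i c.
Proof.
move=> uP Q0; rewrite mxE (bigD1 i) //= big1 ?addr0 // => l /negbTE l_neq_i.
case: (ltngtP l i) => [lt_li | lt_il | /val_inj eq_li].
- by rewrite uP // mul0r.
- by rewrite Q0 // mulr0.
- by rewrite eq_li eqxx in l_neq_i.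
Qed.

Lemma upper_trig_inv d (P Q : 'M[R]_d) :
  P *m Q = 1%:M -> upper_trig P -> upper_trig Q.
Proof.
move=> PQ uP i; have [k] := ubnP (d - i); elim: k i => // k IH i lt_k j lt_ji.
have PQE (c : 'I_d) : (c <= i)%N -> (P *m Q) i c = P i i * Q i c.
  move=> le_ci; apply: mulmx_upper_trigE => // l lt_il.
  by apply: IH; have := ltn_ord l; lia.
have Pii : P i i * Q i i = 1 by rewrite -PQE // PQ mxE eqxx.
have PQij : P i i * Q i j = 0 by rewrite -PQE ?(ltnW lt_ji) // PQ mxE -val_eqE /= gtn_eqF.
by rewrite -[Q i j]mul1r -Pii mulrAC PQij mul0r.
Qed.

Lemma strict_lower_conj d (P C Q : 'M[R]_d) :
  upper_trig P -> strict_lower C -> upper_trig Q -> strict_lower (P^T *m C *m Q^T).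
Proof.
move=> uP lC uQ i j le_ij; rewrite mxE big1 // => l _; rewrite !mxE.
have [lt_lj | le_jl] := ltnP l j; first by rewrite uQ // mulr0.
rewrite big1 ?mul0r // => k _; rewrite !mxE.
have [lt_ik | le_ki] := ltnP i k; first by rewrite uP // mul0r.
by rewrite lC ?mulr0 //; apply: leq_trans le_ki (leq_trans le_ij le_jl).
Qed.

End Triangular.

Section Similarity.
Variable R : comNzRingType.

Lemma comm_tr_conj d (R0 Ri D H : 'M[R]_d) : Ri *m R0 = 1%:M ->
  (R0 *m D *m Ri)^T *m (Ri^T *m H *m R0^T) - (Ri^T *m H *m R0^T) *m (R0 *m D *m Ri)^T
  = Ri^T *m (D^T *m H - H *m D^T) *m R0^T.
Proof.
move=> RiR0; have R0Ri_tr : R0^T *m Ri^T = 1%:M by rewrite -trmx_mul RiR0 trmx1.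
rewrite !trmx_mul mulmxBr mulmxBl !mulmxA.
by rewrite -(mulmxA _ R0^T) R0Ri_tr mulmx1 -(mulmxA _ R0^T Ri^T) R0Ri_tr mulmx1.
Qed.

Lemma perm_mx_orthogonal d (s : 'S_d) : (perm_mx s)^T *m perm_mx s = 1%:M :> 'M[R]_d.
Proof. by rewrite tr_perm_mx -perm_mxM mulVg perm_mx1. Qed.

Lemma col_perm_mulmx d (s : 'S_d) (A B : 'M[R]_d) :
  col_perm s A *m (perm_mx s *m B) = A *m B.
Proof. by rewrite col_permE -tr_perm_mx mulmxA -(mulmxA A) perm_mx_orthogonal mulmx1. Qed.

Lemma diag_mx_col_perm d (s : 'S_d) (r : 'rV[R]_d) :
  diag_mx (col_perm s r) = perm_mx s *m diag_mx r *m perm_mx s^-1.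
Proof.
rewrite -row_permE -col_permE; apply/matrixP => i j.
by rewrite !mxE (inj_eq perm_inj).
Qed.

Lemma conj_diag_col_perm d (s : 'S_d) (W Wi : 'M[R]_d) (r : 'rV[R]_d) :
  W *m diag_mx r *m Wi = col_perm s W *m diag_mx (col_perm s r) *m (perm_mx s *m Wi).
Proof.
rewrite diag_mx_col_perm -!mulmxA col_perm_mulmx; congr (_ *m (_ *m _)).
by rewrite -tr_perm_mx mulmxA perm_mx_orthogonal mul1mx.
Qed.

End Similarity.

Section Triangularization.
Variable R : idomainType.

Lemma exists_last_nonzero d (v : 'I_d -> R) :
  (exists k, v k != 0) -> exists k, v k != 0 /\ forall l : 'I_d, (k < l)%N -> v l = 0.
Proof.
case=> k0 vk0; case: (@arg_maxnP _ k0 (fun k => v k != 0) val vk0) => k vk k_max.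
exists k; split=> // l lt_kl; apply/eqP; apply: contraTT lt_kl => vl.
by rewrite -leqNgt; apply: k_max.
Qed.

Lemma upper_trig_eigen d (T W : 'M[R]_d) (r : 'rV[R]_d) k j :
  upper_trig T -> T *m W = W *m diag_mx r -> W k j != 0 ->
  (forall l : 'I_d, (k < l)%N -> W l j = 0) -> T k k = r 0 j.
Proof.
move=> uT TW Wkj W0; apply: (mulIf Wkj).
by rewrite -mulmx_upper_trigE // TW mul_mx_diag mxE mulrC.
Qed.

Lemma upper_trig_col_perm N d (T : 'I_N -> 'M[R]_d) (W : 'M[R]_d)
    (Lam : 'I_N -> 'I_d -> R) :
  W \in unitmx -> (forall n, upper_trig (T n)) ->
  (forall n, T n *m W = W *m diag_mx (\row_i Lam n i)) ->
  (forall j j', (forall n, Lam n j = Lam n j') -> j = j') ->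
  exists s : 'S_d, upper_trig (col_perm s W).
Proof.
move=> Wu uT TW Lam_inj.
have col_nz j : exists k, W k j != 0.
  apply/existsP; apply: contraT; rewrite negb_exists => /forallP /= W0.
  have := congr1 (fun M : 'M[R]_d => M j j) (mulVmx Wu); rewrite !mxE eqxx big1 => [/eqP|k _].
    by rewrite eq_sym oner_eq0.
  by rewrite (eqP (negPn (W0 k))) mulr0.
have [h h_last] := fin_all_exists (fun j => exists_last_nonzero (col_nz j)).
have eig n j : T n (h j) (h j) = Lam n j.
  by have [Wj Wj0] := h_last j; rewrite (upper_trig_eigen (uT n) (TW n) Wj Wj0) mxE.
have h_inj : injective h by move=> j j' h_eq; apply: Lam_inj => n; rewrite -!eig h_eq.
exists (perm h_inj)^-1%g => k m lt_mk; rewrite mxE.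
have [_ ->] // := h_last ((perm h_inj)^-1%g m).
by rewrite -(permE h_inj) permKV.
Qed.

End Triangularization.

Section LowerBound.
Variable R : realType.

Lemma low_eq0_upper_trig d (A : 'M[R]_d) : low A = 0 -> upper_trig A.
Proof.
by move=> A0 i j lt_ji; have := congr1 (fun M : 'M[R]_d => M i j) A0; rewrite !mxE lt_ji.
Qed.

Lemma strict_lower_low d (A : 'M[R]_d) : strict_lower (low A).
Proof. by move=> i j le_ij; rewrite mxE ltnNge le_ij. Qed.

Lemma mxdot_low d (B C : 'M[R]_d) : strict_lower B -> mxdot B (low C) = mxdot B C.
Proof.
move=> lB; apply: eq_bigr => i _; apply: eq_bigr => j _; rewrite mxE.
by case: ltnP => // le_ij; rewrite lB // !mul0r.
Qed.

Lemma frob2_skew d (X : 'M[R]_d) : X^T = - X -> frob2 X = 2 * frob2 (low X).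
Proof.
move=> sX; have Xsq i j : X i j ^+ 2 = low X i j ^+ 2 + low X j i ^+ 2.
  have := congr1 (fun M : 'M[R]_d => M j i) sX; rewrite !mxE => Xij.
  case: (ltngtP i j) => [lt_ij | lt_ji | /val_inj eq_ij].
  - by rewrite Xij sqrrN expr0n add0r.
  - by rewrite expr0n addr0.
  - rewrite -{}eq_ij in Xij *; have : X i i *+ 2 = 0 by rewrite mulr2n {1}Xij addNr.
    by move/eqP; rewrite mulrn_eq0 => /eqP ->; rewrite expr0n addr0.
rewrite mulr2n mulrDl mul1r -{2}(frob2_tr (low X)) /frob2 -big_split /=.
apply: eq_bigr => i _; rewrite -big_split.
by apply: eq_bigr => j _; rewrite Xsq [(low X)^T _ _]mxE.
Qed.

Section Certificate.
Variables (N d : nat) (mu : 'I_N -> 'I_d -> R).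

Definition eigen_gap (i j : 'I_d) := \sum_n (mu n i - mu n j) ^+ 2.

(* On the diagonal the division is by [eigen_gap i i = 0], giving [0]. *)
Definition comm_preimage (A : 'M[R]_d) (n : 'I_N) : 'M[R]_d :=
  \matrix_(i, j) (A i j * (mu n i - mu n j) / eigen_gap i j).

Let D n := diag_mx (\row_i mu n i).

Lemma sum_comm_preimage (A : 'M[R]_d) : (forall i, A i i = 0) ->
    (forall i j, i != j -> eigen_gap i j != 0) ->
  \sum_n (D n *m comm_preimage A n - comm_preimage A n *m D n) = A.
Proof.
move=> A_diag gap_neq0; apply/matrixP => i j; rewrite summxE.
transitivity (\sum_n A i j * (mu n i - mu n j) ^+ 2 / eigen_gap i j).
  by apply: eq_bigr => n _; rewrite mul_diag_mx mul_mx_diag !mxE; ring.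
rewrite -mulr_suml -mulr_sumr -/(eigen_gap i j).
have [<-|ij] := eqVneq i j; first by rewrite A_diag !mul0r.
by rewrite -mulrA divff ?mulr1 ?gap_neq0.
Qed.

Lemma sum_frob2_comm_preimage (A : 'M[R]_d) (gam : R) : 0 < gam ->
    (forall i j, i != j -> gam <= eigen_gap i j) -> (forall i, A i i = 0) ->
  \sum_n frob2 (comm_preimage A n) <= frob2 A / gam.
Proof.
move=> gam_gt0 gam_le A_diag.
rewrite /frob2 exchange_big mulr_suml; apply: ler_sum => i _.
rewrite exchange_big mulr_suml; apply: ler_sum => j _.
have [<-|ij] := eqVneq i j.
  by rewrite A_diag expr0n mul0r big1 // => n _; rewrite mxE A_diag !mul0r expr0n.
have gap_gt0 := lt_le_trans gam_gt0 (gam_le _ _ ij).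
have -> : \sum_n comm_preimage A n i j ^+ 2 = A i j ^+ 2 / eigen_gap i j.
  transitivity (\sum_n A i j ^+ 2 * (mu n i - mu n j) ^+ 2 / eigen_gap i j ^+ 2).
    by apply: eq_bigr => n _; rewrite mxE expr_div_n exprMn.
  by rewrite -mulr_suml -mulr_sumr -/(eigen_gap i j); field; rewrite gt_eqF.
by rewrite ler_wpM2l ?sqr_ge0 // lef_pV2 ?gam_le.
Qed.

Variables (R0 Ri : 'M[R]_d).
Hypotheses (R0Ri : R0 *m Ri = 1%:M) (R0_upper : upper_trig R0).

Definition certificate (L : 'M[R]_d) (n : 'I_N) : 'M[R]_d :=
  Ri^T *m comm_preimage (R0^T *m L *m Ri^T) n *m R0^T.

Let Ri_upper : upper_trig Ri := upper_trig_inv R0Ri R0_upper.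

Let conj_strict_lower L : strict_lower L -> strict_lower (R0^T *m L *m Ri^T).
Proof. by move=> lL; apply: strict_lower_conj. Qed.

Lemma strict_lower_certificate L n : strict_lower L -> strict_lower (certificate L n).
Proof.
move=> /conj_strict_lower lA; apply: strict_lower_conj => // i j le_ij.
by rewrite mxE lA ?mul0r.
Qed.

Lemma sum_mxdot_certificate (X : 'M[R]_d) :
    (forall i j, i != j -> eigen_gap i j != 0) ->
  \sum_n mxdot (certificate (low X) n) (low (comm_mxr (R0 *m D n *m Ri) X))
    = frob2 (low X).
Proof.
move=> gap_neq0; set A := R0^T *m low X *m Ri^T.
have lA : strict_lower A := conj_strict_lower (strict_lower_low X).
transitivity (\sum_n
    mxdot (Ri^T *m (D n *m comm_preimage A n - comm_preimage A n *m D n) *m R0^T) X).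
  apply: eq_bigr => n _.
  rewrite mxdot_low; last exact/strict_lower_certificate/strict_lower_low.
  by rewrite /comm_mxr mxdot_commr comm_tr_conj ?tr_diag_mx // mulmx1C.
rewrite mxdot_suml -mulmx_suml -mulmx_sumr sum_comm_preimage // => [|i]; last exact: lA.
have RR : Ri^T *m R0^T = 1%:M by rewrite -trmx_mul R0Ri trmx1.
rewrite /A !mulmxA RR mul1mx -mulmxA RR mulmx1.
by rewrite -(mxdot_low _ (strict_lower_low X)) mxdotmm.
Qed.

Lemma sum_frob2_certificate_le (gam c1 c2 : R) (L : 'M[R]_d) :
    0 < gam -> (forall i j, i != j -> gam <= eigen_gap i j) ->
    0 <= c1 -> 0 <= c2 -> mxbound R0 c1 -> mxbound Ri c2 -> strict_lower L ->
  \sum_n frob2 (certificate L n) <= (c1 * c2) ^+ 2 / gam * frob2 L.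
Proof.
move=> gam_gt0 gam_le c1_ge0 c2_ge0 R0c1 Ric2 /conj_strict_lower lA.
have H_le : \sum_n frob2 (comm_preimage (R0^T *m L *m Ri^T) n) <= c1 * c2 * frob2 L / gam.
  apply: le_trans (sum_frob2_comm_preimage gam_gt0 gam_le (fun i => lA i i (leqnn i))) _.
  by apply: ler_wpM2r (frob2_conj_le L c1_ge0 c2_ge0 R0c1 Ric2); rewrite invr_ge0 ltW.
rewrite /certificate.
apply: le_trans (ler_sum _ (fun n _ => frob2_conj_le _ c2_ge0 c1_ge0 Ric2 R0c1)) _.
rewrite -mulr_sumr; apply: le_trans (ler_wpM2l (mulr_ge0 c2_ge0 c1_ge0) H_le) _.
by rewrite [leLHS](_ : _ = (c1 * c2) ^+ 2 / gam * frob2 L) //; ring.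
Qed.

Lemma frob2_low_comm_ge (gam c1 c2 : R) (X : 'M[R]_d) :
    0 < gam -> (forall i j, i != j -> gam <= eigen_gap i j) ->
    0 <= c1 -> 0 <= c2 -> mxbound R0 c1 -> mxbound Ri c2 -> X^T = - X ->
  gam / (2 * (c1 * c2) ^+ 2) * frob2 X
    <= \sum_n frob2 (low (comm_mxr (R0 *m D n *m Ri) X)).
Proof.
move=> gam_gt0 gam_le c1_ge0 c2_ge0 R0c1 Ric2 sX; set Q := \sum_n _.
have gap_neq0 i j : i != j -> eigen_gap i j != 0.
  by move=> ij; rewrite gt_eqF // (lt_le_trans gam_gt0) ?gam_le.
have Q_ge0 : 0 <= Q by apply: sumr_ge0 => n _; apply: frob2_ge0.
have L_le : frob2 (low X) <= (c1 * c2) ^+ 2 / gam * Q.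
  apply: ler_of_sqr_le_mul; first by rewrite !mulr_ge0 ?sqr_ge0 // invr_ge0 ltW.
  have := sum_mxdot_sqr_le (certificate (low X))
    (fun n => low (comm_mxr (R0 *m D n *m Ri) X)).
  rewrite sum_mxdot_certificate // -/Q => /le_trans; apply.
  rewrite mulrA ler_wpM2r // mulrC.
  exact: sum_frob2_certificate_le (strict_lower_low X).
rewrite (frob2_skew sX).
have [c0|c_neq0] := eqVneq (c1 * c2) 0; first by rewrite c0 expr0n mulr0 invr0 mulr0 mul0r.
have gam_c_ge0 : 0 <= gam / (2 * (c1 * c2) ^+ 2).
  by rewrite divr_ge0 ?mulr_ge0 ?sqr_ge0 // ltW.
apply: le_trans (ler_wpM2l gam_c_ge0 (ler_wpM2l _ L_le)) _ => //.
rewrite [X in X <= _](_ : _ = Q) //; field.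
by move: c_neq0; rewrite mulf_eq0 negb_or (gt_eqF gam_gt0) andbC.
Qed.

End Certificate.

Lemma frob2_low_comm_ge_eigenbasis N d (Lam : 'I_N -> 'I_d -> R) (W Wi : 'M[R]_d)
    (gam c1 c2 : R) (X : 'M[R]_d) :
    W *m Wi = 1%:M -> (forall n, upper_trig (W *m diag_mx (\row_i Lam n i) *m Wi)) ->
    0 < gam -> (forall i j, i != j -> gam <= eigen_gap Lam i j) ->
    0 <= c1 -> 0 <= c2 -> mxbound W c1 -> mxbound Wi c2 -> X^T = - X ->
  gam / (2 * (c1 * c2) ^+ 2) * frob2 X
    <= \sum_n frob2 (low (comm_mxr (W *m diag_mx (\row_i Lam n i) *m Wi) X)).
Proof.
move=> WWi T_upper gam_gt0 gam_le c1_ge0 c2_ge0 Wc1 Wic2 sX.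
have Wu : W \in unitmx by case: (mulmx1_unit WWi).
have TW n : W *m diag_mx (\row_i Lam n i) *m Wi *m W = W *m diag_mx (\row_i Lam n i).
  by rewrite -mulmxA (mulmx1C WWi) mulmx1.
have Lam_inj j j' : (forall n, Lam n j = Lam n j') -> j = j'.
  move=> Lam_eq; apply/eqP; apply: contraTT gam_gt0 => /gam_le.
  by rewrite /eigen_gap big1 => [|n _]; rewrite ?Lam_eq ?subrr ?expr0n // leNgt.
have [s R0_upper] := upper_trig_col_perm Wu T_upper TW Lam_inj.
pose mu n i := Lam n (s i).
have TE n : W *m diag_mx (\row_i Lam n i) *m Wi
    = col_perm s W *m diag_mx (\row_i mu n i) *m (perm_mx s *m Wi).
  have -> : \row_i mu n i = col_perm s (\row_i Lam n i) by apply/rowP => i; rewrite !mxE.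
  exact: conj_diag_col_perm.
under eq_bigr do rewrite TE.
apply: frob2_low_comm_ge => //.
- by rewrite col_perm_mulmx.
- by move=> i j ij; apply: gam_le; rewrite (inj_eq perm_inj).
- by rewrite col_permE; apply: mxbound_mulmxr (perm_mx_orthogonal _ _) Wc1.
- exact: mxbound_mulmxl (perm_mx_orthogonal _ s) Wic2.
Qed.

End LowerBound.

Section SingularValues.
Variable R : realType.
Local Open Scope classical_set_scope.

Lemma vnorm_frob2 d (x : 'cV[R]_d) : vnorm x = Num.sqrt (frob2 x).
Proof. by congr Num.sqrt; apply: eq_bigr => i _; rewrite big_ord1. Qed.

Lemma frob2_scale m n (a : R) (A : 'M[R]_(m, n)) : frob2 (a *: A) = a ^+ 2 * frob2 A.
Proof.
rewrite /frob2 mulr_sumr; apply: eq_bigr => i _; rewrite mulr_sumr.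
by apply: eq_bigr => j _; rewrite mxE exprMn.
Qed.

Lemma stretch_in_sphere_image d (V : 'M[R]_d) (z : 'cV[R]_d) : 0 < frob2 z ->
  [set vnorm (V *m x) | x in [set x : 'cV[R]_d | vnorm x = 1]]
    (Num.sqrt (frob2 (V *m z) / frob2 z)).
Proof.
move=> z_gt0; exists ((Num.sqrt (frob2 z))^-1 *: z).
  by rewrite /= vnorm_frob2 frob2_scale exprVn sqr_sqrtr ?ltW // mulVf ?sqrtr1 ?gt_eqF.
by rewrite vnorm_frob2 -scalemxAr frob2_scale exprVn sqr_sqrtr ?ltW // mulrC.
Qed.

Lemma mxbound_sigma_max d (V : 'M[R]_d) : mxbound V (sigma_max V ^+ 2).
Proof.
move=> z; have [z0|z_neq0] := eqVneq (frob2 z) 0.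
  by rewrite z0 mulr0 -(mulr0 (frob2 V)) -z0 frob2_mulmx_le.
have z_gt0 : 0 < frob2 z by rewrite lt_def z_neq0 frob2_ge0.
have ub : has_ubound [set vnorm (V *m x) | x in [set x : 'cV[R]_d | vnorm x = 1]].
  exists (Num.sqrt (frob2 V)) => _ [x /= x1 <-].
  rewrite vnorm_frob2 ler_sqrt ?frob2_ge0 //.
  have x_1 : frob2 x = 1 by rewrite -[frob2 x]sqr_sqrtr ?frob2_ge0 // -vnorm_frob2 x1 expr1n.
  by rewrite -[frob2 V]mulr1 -x_1 frob2_mulmx_le.
have := ub_le_sup ub (stretch_in_sphere_image V z_gt0).
rewrite -/(sigma_max V) => sq_le; have smax_ge0 := le_trans (sqrtr_ge0 _) sq_le.
rewrite -ler_pdivrMr // -[_ / _]sqr_sqrtr ?divr_ge0 ?frob2_ge0 //.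
by rewrite ler_pXn2r ?nnegrE ?sqrtr_ge0.
Qed.

Lemma sigma_min_ge0 d (V : 'M[R]_d) : 0 <= sigma_min V.
Proof.
rewrite /sigma_min; set E := [set _ | _ in _].
have [[r Er]|E0] := pselect (E !=set0).
  by apply: lb_le_inf; [exists r | move=> _ [x _ <-]; rewrite sqrtr_ge0].
by rewrite (_ : E = set0) ?inf0 //; apply/seteqP; split=> // r Er; apply: E0; exists r.
Qed.

Lemma sigma_min_sqr_le d (V : 'M[R]_d) (z : 'cV[R]_d) :
  sigma_min V ^+ 2 * frob2 z <= frob2 (V *m z).
Proof.
have [z0|z_neq0] := eqVneq (frob2 z) 0; first by rewrite z0 mulr0 frob2_ge0.
have z_gt0 : 0 < frob2 z by rewrite lt_def z_neq0 frob2_ge0.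
have lb : has_lbound [set vnorm (V *m x) | x in [set x : 'cV[R]_d | vnorm x = 1]].
  by exists 0 => _ [x _ <-]; apply: sqrtr_ge0.
have := ge_inf lb (stretch_in_sphere_image V z_gt0); rewrite -/(sigma_min V) => le_sq.
rewrite -ler_pdivlMr // -[_ / _]sqr_sqrtr ?divr_ge0 ?frob2_ge0 //.
by rewrite ler_pXn2r ?nnegrE ?sqrtr_ge0 ?sigma_min_ge0.
Qed.

Lemma mxbound_invmx d (V : 'M[R]_d) : V \in unitmx -> 0 < sigma_min V ->
  mxbound (invmx V) (sigma_min V ^+ 2)^-1.
Proof.
move=> Vu smin_gt0 y; rewrite ler_pdivlMl ?exprn_gt0 //.
by have := sigma_min_sqr_le V (invmx V *m y); rewrite mulmxA mulmxV // mul1mx.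
Qed.

Lemma gap_le_eigen_gap N d (Lam : 'I_N -> 'I_d -> R) (i j : 'I_d) :
  i != j -> gap Lam <= eigen_gap Lam i j.
Proof.
move=> ij; have lb : has_lbound [set (\sum_n (Lam n p.1 - Lam n p.2) ^+ 2)
    | p in [set p : 'I_d * 'I_d | (p.1 < p.2)%N]].
  by exists 0 => _ [p _ <-]; apply: sumr_ge0 => n _; apply: sqr_ge0.
case: (ltngtP i j) => [lt_ij | lt_ji | /val_inj eq_ij]; last by rewrite eq_ij eqxx in ij.
  by apply: (ge_inf lb); exists (i, j).
have -> : eigen_gap Lam i j = eigen_gap Lam j i.
  by apply: eq_bigr => n _; rewrite -sqrrN opprB.
by apply: (ge_inf lb); exists (j, i).
Qed.

End SingularValues.
Theorem lemma10 (R : realType) (N d : nat) (V : 'M[R]_d)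
  (Lam : 'I_N -> 'I_d -> R) (U : 'M[R]_d) :
  V \in unitmx ->
  U^T *m U = 1%:M ->
  (forall n : 'I_N,
     low (U^T *m (V *m diag_mx (\row_i Lam n i) *m invmx V) *m U) = 0) ->
  forall X : 'M[R]_d, X^T = - X ->
  \sum_(n < N)
     \tr ((low (comm_mxr (U^T *m (V *m diag_mx (\row_i Lam n i) *m invmx V) *m U) X))^T
          *m low (comm_mxr (U^T *m (V *m diag_mx (\row_i Lam n i) *m invmx V) *m U) X))
  >= gap Lam / (2 * kappa V ^+ 4) * frob X ^+ 2.
Proof.
move=> Vu UU T_low X sX.
under eq_bigr do rewrite frob2_trace.
rewrite /frob sqr_sqrtr -/(frob2 X) ?frob2_ge0 //.
set S := \sum_(n < N) _; have S_ge0 : 0 <= S by apply: sumr_ge0 => n _; apply: frob2_ge0.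
have [gap_le0|gap_gt0] := lerP (gap Lam) 0.
  apply: le_trans _ S_ge0; rewrite mulr_le0_ge0 ?frob2_ge0 // mulr_le0_ge0 //.
  by rewrite invr_ge0 mulr_ge0 // exprn_even_ge0.
(* For invertible V this case does not occur, but x / 0 = 0 makes it trivial. *)
have [smin0|smin_neq0] := eqVneq (sigma_min V) 0.
  by rewrite /kappa smin0 invr0 mulr0 expr0n mulr0 invr0 mulr0 mul0r.
have smin_gt0 : 0 < sigma_min V by rewrite lt_def smin_neq0 sigma_min_ge0.
have TE n : U^T *m (V *m diag_mx (\row_i Lam n i) *m invmx V) *m U
    = U^T *m V *m diag_mx (\row_i Lam n i) *m (invmx V *m U).
  by rewrite !mulmxA.
rewrite /S; under eq_bigr do rewrite TE.
have -> : kappa V ^+ 4 = (sigma_max V ^+ 2 / sigma_min V ^+ 2) ^+ 2.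
  by rewrite /kappa -expr_div_n -exprM.
apply: frob2_low_comm_ge_eigenbasis (gap_le_eigen_gap Lam) (sqr_ge0 _) _ _ _ sX => //.
- by rewrite mulmxA -(mulmxA _ V) mulmxV ?mulmx1.
- by move=> n; rewrite -TE; apply: low_eq0_upper_trig.
- by rewrite invr_ge0 sqr_ge0.
- by apply: mxbound_mulmxl (mxbound_sigma_max V); rewrite trmxK mulmx1C.
- exact: mxbound_mulmxr UU (mxbound_invmx Vu smin_gt0).
Qed.
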